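(* Let $k:[0,\infty)\to[0,\infty)$ be of the form $k(x)=\nu((x,\infty))$ for a finite Borel measure $\nu$ on $(0,\infty)$ with $\int_{(2,\infty)}\log x\,\nu(dx)<\infty$ and $k(0)=\nu((0,\infty))=\alpha\in(2,\infty)$, and let $\varphi(t)=\exp\big(\int_0^\infty(e^{itx}-1)\frac{k(x)}{x}dx\big)$. Then there exist a function $L:(1,\infty)\to[0,\infty)$ that is slowly varying at $\infty$ and a constant $B>0$ such that \[ \lim_{|t|\to\infty}\frac{|t|^{\alpha}|\varphi(t)|}{L(|t|)}=B. \]
   Context: A measurable function $U$ on $(1,\infty)$ (or $[0,\infty)$) with values in $[0,\infty)$ is slowly varying at $\infty$ if $\lim_{t\to\infty}U(tx)/U(t)=1$ for every $x>0$. Here $\varphi$ is the characteristic function of the stationary distribution of the Ornstein–Uhlenbeck process $dX_t=-\lambda X_tdt+dJ_{\lambda t}$ driven by a compound Poisson subordinator $J$ with Lévy measure $\nu$. *)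

From Stdlib Require Import Reals ClassicalEpsilon.
Open Scope R_scope.

Definition RInt_is (f : R -> R) (a b v : R) : Prop :=
  exists pr : Riemann_integrable f a b, RiemannInt pr = v.

Definition improper_int_0_inf_is (f : R -> R) (l : R) : Prop :=
  forall eps, 0 < eps -> exists d M, 0 < d /\ 0 < M /\
    forall a b, 0 < a < d -> M < b ->
      exists v, RInt_is f a b v /\ Rabs (v - l) < eps.

Definition improper_int_from_is (f : R -> R) (c l : R) : Prop :=
  forall eps, 0 < eps -> exists M, c < M /\
    forall b, M < b -> exists v, RInt_is f c b v /\ Rabs (v - l) < eps.

Definition improper_int_0_inf (f : R -> R) : R :=
  epsilon (inhabits 0) (fun l => improper_int_0_inf_is f l).

(* k is the tail function x |-> nu((x,oo)) of a finite Borel measure nu on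
   (0,oo): equivalently k is nonincreasing, right-continuous on [0,oo),
   nonnegative, and tends to 0 at +oo (Lebesgue-Stieltjes correspondence). *)
Definition is_tail_function (k : R -> R) : Prop :=
  (forall x y, 0 <= x <= y -> k y <= k x) /\
  (forall x, 0 <= x -> 0 <= k x) /\
  (forall x, 0 <= x -> forall eps, 0 < eps -> exists d, 0 < d /\
      forall y, x <= y < x + d -> Rabs (k y - k x) < eps) /\
  (forall eps, 0 < eps -> exists M, forall x, M < x -> Rabs (k x) < eps).

(* phi(t) = exp( int_0^oo (e^{itx}-1) k(x)/x dx ), written as real and
   imaginary parts. *)
Definition phi_exp_re (k : R -> R) (t : R) : R :=
  improper_int_0_inf (fun x => (cos (t * x) - 1) * k x / x).
Definition phi_exp_im (k : R -> R) (t : R) : R :=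
  improper_int_0_inf (fun x => sin (t * x) * k x / x).
Definition phi_re (k : R -> R) (t : R) : R :=
  exp (phi_exp_re k t) * cos (phi_exp_im k t).
Definition phi_im (k : R -> R) (t : R) : R :=
  exp (phi_exp_re k t) * sin (phi_exp_im k t).
Definition phi_abs (k : R -> R) (t : R) : R :=
  sqrt (phi_re k t ^ 2 + phi_im k t ^ 2).

Definition slowly_varying (L : R -> R) : Prop :=
  forall x, 0 < x -> forall eps, 0 < eps -> exists M, 1 < M /\
    forall t, M < t -> Rabs (L (t * x) / L t - 1) < eps.

From Stdlib Require Import Reals Lra Lia ClassicalEpsilon FunctionalExtensionality.
From Coquelicot Require Import Coquelicot.
Open Scope R_scope.

(* Since |phi(t)| = exp Re psi(t) with Re psi(t) = int_0^oo (cos(tx) - 1) k(x)/x dx, take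
     L(t) = t^alpha exp (int_1^(1/t) k(x)/x dx).
   Then L(tx)/L(t) = exp int_(1/(tx))^(1/t) (alpha - k(y))/y dy, which tends to 1 because
   k(y) -> alpha as y -> 0+; so L is slowly varying, and t^alpha |phi(t)| / L(t) = exp D(t) with
   D(t) = Re psi(t) - int_1^(1/t) k(x)/x dx.
   Comparing k with alpha on (0, delta), for large t and all sufficiently small a and large b,
   D(t) is close to
     alpha Q(ta, tb) - int_1^b k(x)/x dx,   Q(p, q) = int_p^q cos u/u du - int_p^1 du/u;
   all oscillatory pieces are controlled by the
   second-mean-value bound |int_p^q cos(tx) h(x) dx| <= 4 pi h(p)/t for nonincreasing h >= 0.
   As Q(p, q) -> c (in fact c = -gamma) when p -> 0, q -> oo, D(t) converges to
   alpha c - int_1^oo k(x)/x dx, and B is its exponential. *)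

(* Coquelicot states these for an abstract normed module, with [plus], [scal], [opp];
   the versions below use the operations of R, so that they can be used for rewriting. *)
Lemma RInt_extR (f g : R -> R) a b :
  (forall x, Rmin a b < x < Rmax a b -> f x = g x) -> RInt f a b = RInt g a b.
Proof. exact (RInt_ext f g a b). Qed.

Lemma ex_RInt_extR (f g : R -> R) a b :
  (forall x, Rmin a b < x < Rmax a b -> f x = g x) -> ex_RInt f a b -> ex_RInt g a b.
Proof. exact (ex_RInt_ext f g a b). Qed.

Lemma RInt_ChaslesR (f : R -> R) a b c : ex_RInt f a b -> ex_RInt f b c ->
  RInt f a b + RInt f b c = RInt f a c.
Proof. exact (RInt_Chasles f a b c). Qed.

Lemma RInt_plusR (f g : R -> R) a b : ex_RInt f a b -> ex_RInt g a b ->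
  RInt (fun x => f x + g x) a b = RInt f a b + RInt g a b.
Proof. exact (RInt_plus f g a b). Qed.

Lemma RInt_scalR (f : R -> R) a b l : ex_RInt f a b ->
  RInt (fun x => l * f x) a b = l * RInt f a b.
Proof. exact (RInt_scal f a b l). Qed.

Lemma ex_RInt_scalR (f : R -> R) a b l : ex_RInt f a b -> ex_RInt (fun x => l * f x) a b.
Proof. exact (ex_RInt_scal f a b l). Qed.

Lemma RInt_minusR (f g : R -> R) a b : ex_RInt f a b -> ex_RInt g a b ->
  RInt (fun x => f x - g x) a b = RInt f a b - RInt g a b.
Proof. exact (RInt_minus f g a b). Qed.

Lemma ex_RInt_minusR (f g : R -> R) a b : ex_RInt f a b -> ex_RInt g a b ->
  ex_RInt (fun x => f x - g x) a b.
Proof. exact (ex_RInt_minus f g a b). Qed.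

Lemma RInt_swapR (f : R -> R) a b : ex_RInt f a b -> RInt f b a = - RInt f a b.
Proof. intros Hf; exact (eq_sym (opp_RInt_swap f a b Hf)). Qed.

Lemma abs_RInt_le_const_abs (f : R -> R) a b M : ex_RInt f a b ->
  (forall x, Rmin a b <= x <= Rmax a b -> Rabs (f x) <= M) ->
  Rabs (RInt f a b) <= Rabs (b - a) * M.
Proof.
  intros Hf HM. destruct (Rle_dec a b) as [Hab|Hab].
  - rewrite Rmin_left, Rmax_right in HM by lra. rewrite (Rabs_right (b - a)) by lra.
    apply abs_RInt_le_const; auto.
  - rewrite Rmin_right, Rmax_left in HM by lra.
    rewrite <- (Rabs_Ropp (RInt f a b)), <- (RInt_swapR _ _ _ Hf), (Rabs_left (b - a)) by lra.
    replace (- (b - a)) with (a - b) by ring.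
    apply abs_RInt_le_const; auto; [lra | now apply ex_RInt_swap].
Qed.

Lemma ex_RInt_derivable (f : R -> R) p q :
  (forall x, Rmin p q <= x <= Rmax p q -> ex_derive f x) -> ex_RInt f p q.
Proof.
  intros Hf. apply (@ex_RInt_continuous R_CompleteNormedModule). intros x Hx.
  exact (ex_derive_continuous f x (Hf x Hx)).
Qed.

Lemma ex_RInt_cos t p q : ex_RInt (fun x => cos (t * x)) p q.
Proof. apply ex_RInt_derivable. intros x _. auto_derive. auto. Qed.

Lemma ex_RInt_inv p q : 0 < p -> 0 < q -> ex_RInt (fun x => / x) p q.
Proof.
  intros Hp Hq. apply ex_RInt_derivable. intros x Hx.
  pose proof (Rmin_glb_lt _ _ _ Hp Hq). auto_derive. lra.
Qed.

Lemma ex_RInt_cos_div t p q : 0 < p -> 0 < q -> ex_RInt (fun x => cos (t * x) / x) p q.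
Proof.
  intros Hp Hq. apply ex_RInt_derivable. intros x Hx.
  pose proof (Rmin_glb_lt _ _ _ Hp Hq). auto_derive. lra.
Qed.

Lemma exp_continuous_eps y0 eps : 0 < eps -> exists rho, 0 < rho /\
  forall y, Rabs (y - y0) < rho -> Rabs (exp y - exp y0) < eps.
Proof.
  intros Heps.
  destruct (derivable_continuous_pt exp y0 (derivable_pt_exp y0) eps Heps) as (rho & Hrho & H).
  exists rho. split; [exact Hrho|]. intros y Hy.
  destruct (Req_dec y y0) as [->|Hne]; [rewrite Rminus_diag, Rabs_R0; exact Heps|].
  apply H. split; [split; [exact I | auto] | exact Hy].
Qed.

(** * Riemann integrability by step envelopes *)

Lemma ex_RInt_sandwich (f : R -> R) a b : a < b ->
  (forall eps, 0 < eps -> exists g1 g2 : R -> R, ex_RInt g1 a b /\ ex_RInt g2 a b /\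
     (forall x, a <= x <= b -> g1 x <= f x <= g2 x) /\
     RInt g2 a b - RInt g1 a b < eps) ->
  ex_RInt f a b.
Proof.
  intros Hab H.
  apply (proj1 (filterlim_locally_cauchy (U := R_CompleteSpace) (F := Riemann_fine a b)
           (fun ptd => scal (sign (b - a)) (Riemann_sum f ptd)))).
  intros eps.
  assert (He3 : 0 < eps / 3) by (destruct eps; simpl; lra).
  destruct (H _ He3) as (g1 & g2 & Hg1 & Hg2 & Hg & Hgap).
  pose proof (RInt_correct _ _ _ Hg1 _ (locally_ball (RInt g1 a b) (mkposreal _ He3))) as L1.
  pose proof (RInt_correct _ _ _ Hg2 _ (locally_ball (RInt g2 a b) (mkposreal _ He3))) as L2.
  assert (Hs : sign (b - a) = 1) by (apply sign_eq_1; lra).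
  assert (Hmin : Rmin a b = a) by (apply Rmin_left; lra).
  assert (Hmax : Rmax a b = b) by (apply Rmax_right; lra).
  exists (fun ptd => (pointed_subdiv ptd /\ SF_h ptd = Rmin a b /\
                       seq.last (SF_h ptd) (SF_lx ptd) = Rmax a b) /\
    ball (RInt g1 a b) (eps / 3) (scal (sign (b - a)) (Riemann_sum g1 ptd)) /\
    ball (RInt g2 a b) (eps / 3) (scal (sign (b - a)) (Riemann_sum g2 ptd))).
  split.
  - apply filter_and; [unfold Riemann_fine, within; apply filter_forall; auto |].
    apply filter_and; assumption.
  - intros u v [[Pu [hu lu]] [b1u b2u]] [[Pv [hv lv]] [b1v b2v]].
    change (Rabs (sign (b - a) * Riemann_sum f v - sign (b - a) * Riemann_sum f u) < eps).
    change (Rabs (sign (b - a) * Riemann_sum g1 u - RInt g1 a b) < eps / 3) in b1u.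
    change (Rabs (sign (b - a) * Riemann_sum g2 u - RInt g2 a b) < eps / 3) in b2u.
    change (Rabs (sign (b - a) * Riemann_sum g1 v - RInt g1 a b) < eps / 3) in b1v.
    change (Rabs (sign (b - a) * Riemann_sum g2 v - RInt g2 a b) < eps / 3) in b2v.
    rewrite Hs, !Rmult_1_l in *. rewrite Hmin in hu, hv. rewrite Hmax in lu, lv.
    assert (Henv : forall ptd, pointed_subdiv ptd -> SF_h ptd = a ->
              seq.last (SF_h ptd) (SF_lx ptd) = b ->
              Riemann_sum g1 ptd <= Riemann_sum f ptd <= Riemann_sum g2 ptd).
    { intros ptd Hp Hh Hl. split; apply Riemann_sum_le; auto;
        intros x Hx; apply Hg; rewrite <- Hh, <- Hl; exact Hx. }
    destruct (Henv u) as [u1 u2]; auto. destruct (Henv v) as [v1 v2]; auto.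
    apply Rabs_lt_between in b1u, b2u, b1v, b2v. apply Rabs_lt_between. lra.
Qed.

Definition extend_const (g : R -> R) (c v : R) : R -> R :=
  fun x => if Rle_dec x c then g x else v.

Lemma is_RInt_extend_const (g : R -> R) a c d v I : a <= c <= d ->
  is_RInt g a c I -> is_RInt (extend_const g c v) a d (I + (d - c) * v).
Proof.
  intros Hacd Hg. unfold extend_const.
  change (I + (d - c) * v) with (plus I (scal (d - c) v)).
  apply (is_RInt_Chasles _ a c d).
  - apply is_RInt_ext with g; [|exact Hg].
    intros x Hx. rewrite Rmin_left, Rmax_right in Hx by lra.
    destruct (Rle_dec x c); [reflexivity | lra].
  - apply is_RInt_ext with (fun _ => v); [| exact (is_RInt_const c d v)].
    intros x Hx. rewrite Rmin_left, Rmax_right in Hx by lra.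
    destruct (Rle_dec x c); [lra | reflexivity].
Qed.

Section Oscillation.

Variables (f m : R -> R) (a b C D : R).
Hypothesis m_nonincr : forall u v, a <= u <= v -> v <= b -> m v <= m u.
Hypothesis f_osc : forall u s v, a <= u -> u <= s -> s <= v -> v <= b ->
  Rabs (f s - f u) <= C * (m u - m v) + D * (v - u).

Lemma oscillation_envelopes (del : R) (n : nat) : 0 < del -> a + INR n * del <= b ->
  exists g1 g2 I1 I2, is_RInt g1 a (a + INR n * del) I1 /\ is_RInt g2 a (a + INR n * del) I2 /\
    (forall x, a <= x <= a + INR n * del -> g1 x <= f x <= g2 x) /\
    I2 - I1 <= 2 * del * (C * (m a - m (a + INR n * del)) + D * (INR n * del)).
Proof.
  intros Hdel. induction n as [|n IH]; intros Hn.
  - exists f, f, 0, 0. rewrite Rmult_0_l, Rplus_0_r.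
    repeat split; try apply (is_RInt_point f a); intros; lra.
  - rewrite S_INR in Hn |- *.
    assert (Hn0 : 0 <= INR n) by apply pos_INR.
    set (c := a + INR n * del) in IH.
    replace (a + (INR n + 1) * del) with (c + del) by (unfold c; ring).
    destruct IH as (g1 & g2 & I1 & I2 & Hg1 & Hg2 & Hg & Hgap).
    { unfold c. lra. }
    set (w := C * (m c - m (c + del)) + D * del).
    exists (extend_const g1 c (f c - w)), (extend_const g2 c (f c + w)),
      (I1 + (c + del - c) * (f c - w)), (I2 + (c + del - c) * (f c + w)).
    split; [apply is_RInt_extend_const; auto; unfold c; nra|].
    split; [apply is_RInt_extend_const; auto; unfold c; nra|].
    split.
    + intros x Hx. unfold extend_const. destruct (Rle_dec x c); [apply Hg; lra|].
      assert (Hx' := f_osc c x (c + del)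
                       ltac:(unfold c; nra) ltac:(lra) ltac:(lra) ltac:(unfold c; nra)).
      replace (c + del - c) with del in Hx' by ring.
      apply Rabs_le_between in Hx'. fold w in Hx'. lra.
    + unfold w in *. lra.
Qed.

Lemma ex_RInt_oscillation : a < b -> 0 <= C -> 0 <= D -> ex_RInt f a b.
Proof.
  intros Hab HC HD. apply ex_RInt_sandwich; auto.
  intros eps Heps.
  set (X := 2 * (b - a) * (C * (m a - m b) + D * (b - a))).
  assert (HX : 0 <= X).
  { assert (m b <= m a) by (apply m_nonincr; lra). unfold X.
    apply Rmult_le_pos; [lra|]. apply Rplus_le_le_0_compat; apply Rmult_le_pos; lra. }
  destruct (archimed_cor1 (eps / (X + 1))) as (N & HN & HN0); [apply Rdiv_lt_0_compat; lra|].
  assert (HNpos : 0 < INR N) by (apply lt_0_INR; lia).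
  set (del := (b - a) / INR N).
  assert (Hdel : 0 < del) by (unfold del; apply Rdiv_lt_0_compat; lra).
  assert (HNdel : a + INR N * del = b) by (unfold del; field; lra).
  destruct (oscillation_envelopes del N Hdel ltac:(lra))
    as (g1 & g2 & I1 & I2 & Hg1 & Hg2 & Hg & Hgap).
  rewrite HNdel in Hg1, Hg2, Hg, Hgap.
  exists g1, g2.
  split; [eexists; exact Hg1|]. split; [eexists; exact Hg2|]. split; [exact Hg|].
  rewrite (is_RInt_unique _ _ _ _ Hg1), (is_RInt_unique _ _ _ _ Hg2).
  replace (INR N * del) with (b - a) in Hgap by lra.
  replace (2 * del * (C * (m a - m b) + D * (b - a))) with (X / INR N) in Hgap
    by (unfold X, del; field; lra).
  apply Rle_lt_trans with (X / INR N); [exact Hgap|].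
  apply Rle_lt_trans with (X * (eps / (X + 1))).
  - unfold Rdiv. apply Rmult_le_compat_l; lra.
  - apply Rmult_lt_reg_r with (X + 1); [lra|].
    replace (X * (eps / (X + 1)) * (X + 1)) with (X * eps) by (field; lra). nra.
Qed.

End Oscillation.

Lemma ex_RInt_lipschitz_mul_nonincr (c h : R -> R) a b Lc Mc : a <= b -> 0 <= Lc -> 0 <= Mc ->
  (forall x y, a <= x <= b -> a <= y <= b -> Rabs (c x - c y) <= Lc * Rabs (x - y)) ->
  (forall x, a <= x <= b -> Rabs (c x) <= Mc) ->
  (forall x y, a <= x -> x <= y -> y <= b -> h y <= h x) ->
  (forall x, a <= x <= b -> 0 <= h x) ->
  ex_RInt (fun x => c x * h x) a b.
Proof.
  intros Hab HL HMc Hlip Hc Hm Hh.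
  destruct (Req_dec a b) as [<-|Hne]; [apply ex_RInt_point|].
  assert (Hha : 0 <= h a) by (apply Hh; lra).
  apply (ex_RInt_oscillation _ h a b Mc (h a * Lc)); try lra.
  - intros u v Hu Hv. apply Hm; lra.
  - intros u s v Hu Hus Hsv Hv.
    replace (c s * h s - c u * h u) with (c s * (h s - h u) + h u * (c s - c u)) by ring.
    eapply Rle_trans; [apply Rabs_triang|]. rewrite !Rabs_mult.
    assert (h s <= h u /\ h v <= h s /\ h u <= h a) as (Hsu & Hvs & Hua)
      by (repeat split; apply Hm; lra).
    assert (Rabs (c s) <= Mc) by (apply Hc; lra).
    assert (Rabs (c s - c u) <= Lc * (v - u)).
    { eapply Rle_trans; [apply Hlip; lra|].
      rewrite Rabs_right by lra. apply Rmult_le_compat_l; lra. }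
    assert (0 <= h u) by (apply Hh; lra).
    rewrite (Rabs_left1 (h s - h u)), (Rabs_right (h u)) by lra.
    pose proof (Rabs_pos (c s)). pose proof (Rabs_pos (c s - c u)).
    apply Rplus_le_compat; [nra|].
    apply Rle_trans with (h a * Rabs (c s - c u)); [nra|].
    rewrite Rmult_assoc. apply Rmult_le_compat_l; lra.
  - apply Rmult_le_pos; lra.
Qed.

(** * Integrals of cos(tx) against nonincreasing functions *)

Lemma Rabs_cos_sub x y : Rabs (cos x - cos y) <= Rabs (x - y).
Proof.
  destruct (MVT_abs cos (fun c => - sin c) y x) as (c & Hc & _).
  { intros; apply derivable_pt_lim_cos. }
  rewrite Hc, Rabs_Ropp.
  pose proof (Rabs_pos (x - y)). assert (Rabs (sin c) <= 1) by (apply Rabs_le, SIN_bound). nra.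
Qed.

Lemma Rabs_cos_sub_1_le y : 0 <= y -> Rabs (cos y - 1) <= y.
Proof.
  intros Hy. rewrite <- cos_0. eapply Rle_trans; [apply Rabs_cos_sub|].
  rewrite Rminus_0_r, Rabs_right; lra.
Qed.

Lemma ex_RInt_cos_mul_nonincr t (h : R -> R) p q : p <= q ->
  (forall x y, p <= x -> x <= y -> y <= q -> h y <= h x) ->
  (forall x, p <= x <= q -> 0 <= h x) ->
  ex_RInt (fun x => cos (t * x) * h x) p q.
Proof.
  intros Hpq Hm Hh.
  apply (ex_RInt_lipschitz_mul_nonincr _ _ p q (Rabs t) 1); auto; try lra.
  - apply Rabs_pos.
  - intros x y _ _. rewrite <- Rabs_mult, Rmult_minus_distr_l. apply Rabs_cos_sub.
  - intros; apply Rabs_le, COS_bound.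
Qed.

Lemma RInt_cos_period t c : 0 < t -> RInt (fun x => cos (t * x)) c (c + 2 * PI / t) = 0.
Proof.
  intros Ht. apply is_RInt_unique.
  replace 0 with (minus (sin (t * (c + 2 * PI / t)) / t) (sin (t * c) / t)).
  - apply (is_RInt_derive (fun x => sin (t * x) / t)).
    + intros x _. auto_derive; auto. field. lra.
    + intros x _. refine (ex_derive_continuous (fun x => cos (t * x)) x _). auto_derive. auto.
  - unfold minus, plus, opp; simpl.
    replace (t * (c + 2 * PI / t)) with (t * c + 2 * INR 1 * PI) by (simpl; field; lra).
    rewrite sin_period. field. lra.
Qed.

Lemma abs_RInt_cos_mul_nonincr_period t (h : R -> R) c : 0 < t ->
  (forall x y, c <= x -> x <= y -> y <= c + 2 * PI / t -> h y <= h x) ->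
  Rabs (RInt (fun x => cos (t * x) * h x) c (c + 2 * PI / t)) <=
    2 * PI / t * (h c - h (c + 2 * PI / t)).
Proof.
  intros Ht Hm.
  set (P := 2 * PI / t) in *.
  assert (HP : 0 < P) by (unfold P; pose proof PI_RGT_0; apply Rdiv_lt_0_compat; lra).
  set (hP := h (c + P)).
  assert (Hbetween : forall x, c <= x <= c + P -> hP <= h x <= h c).
  { intros x Hx. unfold hP. split; apply Hm; lra. }
  assert (Hshift : ex_RInt (fun x => cos (t * x) * (h x - hP)) c (c + P)).
  { apply ex_RInt_cos_mul_nonincr; [lra| |].
    - intros x y Hx Hxy Hy. assert (h y <= h x) by (apply Hm; lra). lra.
    - intros x Hx. pose proof (Hbetween x Hx). lra. }
  (* the constant part of [h] integrates to zero against a full period of [cos] *)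
  rewrite (RInt_extR _ (fun x => cos (t * x) * (h x - hP) + hP * cos (t * x)))
    by (intros; ring).
  rewrite (RInt_plusR (fun x => cos (t * x) * (h x - hP))), RInt_scalR, RInt_cos_period,
    Rmult_0_r, Rplus_0_r by auto using ex_RInt_scalR, ex_RInt_cos.
  replace (P * (h c - hP)) with ((c + P - c) * (h c - hP)) by ring.
  apply abs_RInt_le_const; auto; [lra|].
  intros x Hx. pose proof (Hbetween x Hx).
  rewrite Rabs_mult, (Rabs_right (h x - hP)) by lra.
  assert (Rabs (cos (t * x)) <= 1) by (apply Rabs_le, COS_bound).
  pose proof (Rabs_pos (cos (t * x))). nra.
Qed.

Lemma abs_RInt_cos_mul_nonincr_periods t (h : R -> R) q (n : nat) : 0 < t ->
  forall c, c <= q -> q <= c + INR n * (2 * PI / t) ->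
  (forall x y, c <= x -> x <= y -> y <= q -> h y <= h x) ->
  (forall x, c <= x <= q -> 0 <= h x) ->
  Rabs (RInt (fun x => cos (t * x) * h x) c q) <= 2 * PI / t * (2 * h c - h q).
Proof.
  intros Ht. set (P := 2 * PI / t).
  assert (HP : 0 < P) by (unfold P; pose proof PI_RGT_0; apply Rdiv_lt_0_compat; lra).
  induction n as [|n IH]; intros c Hcq Hqn Hm Hh; assert (Hqc : h q <= h c) by (apply Hm; lra).
  - replace q with c by (simpl in Hqn; lra).
    rewrite RInt_point. change (Rabs 0 <= P * (2 * h c - h c)).
    rewrite Rabs_R0.
    assert (0 <= h c) by (apply Hh; lra). nra.
  - destruct (Rle_dec q (c + P)) as [Hle|Hgt].
    + eapply Rle_trans.
      * apply abs_RInt_le_const with (M := h c); [lra | apply ex_RInt_cos_mul_nonincr; auto |].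
        intros x Hx. rewrite Rabs_mult.
        assert (0 <= h x <= h c) by (split; [apply Hh | apply Hm]; lra).
        assert (Rabs (cos (t * x)) <= 1) by (apply Rabs_le, COS_bound).
        rewrite (Rabs_right (h x)) by lra. pose proof (Rabs_pos (cos (t * x))). nra.
      * assert (0 <= h q) by (apply Hh; lra). nra.
    + assert (HcP : h (c + P) <= h c) by (apply Hm; lra).
      rewrite <- (RInt_ChaslesR _ c (c + P) q)
        by (apply ex_RInt_cos_mul_nonincr; try lra; intros; [apply Hm | apply Hh]; lra).
      eapply Rle_trans; [apply Rabs_triang|].
      assert (B1 : Rabs (RInt (fun x => cos (t * x) * h x) c (c + P)) <= P * (h c - h (c + P)))
        by (apply abs_RInt_cos_mul_nonincr_period; auto; intros; apply Hm; unfold P in *; lra).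
      assert (B2 : Rabs (RInt (fun x => cos (t * x) * h x) (c + P) q) <= P * (2 * h (c + P) - h q)).
      { apply IH; try lra; [rewrite S_INR in Hqn; lra | intros; apply Hm | intros; apply Hh]; lra. }
      assert (P * h (c + P) <= P * h c) by (apply Rmult_le_compat_l; lra).
      lra.
Qed.

Lemma abs_RInt_cos_mul_nonincr t (h : R -> R) p q : 0 < t -> p <= q ->
  (forall x y, p <= x -> x <= y -> y <= q -> h y <= h x) ->
  (forall x, p <= x <= q -> 0 <= h x) ->
  Rabs (RInt (fun x => cos (t * x) * h x) p q) <= 4 * PI * h p / t.
Proof.
  intros Ht Hpq Hm Hh. pose proof PI_RGT_0.
  assert (HP : 0 < 2 * PI / t) by (apply Rdiv_lt_0_compat; lra).
  destruct (INR_unbounded ((q - p) / (2 * PI / t))) as [n Hn].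
  eapply Rle_trans; [apply (abs_RInt_cos_mul_nonincr_periods t h q n Ht p); auto|].
  - apply Rmult_gt_compat_r with (r := 2 * PI / t) in Hn; [|lra].
    replace ((q - p) / (2 * PI / t) * (2 * PI / t)) with (q - p) in Hn by (field; lra). lra.
  - assert (0 <= h q <= h p) by (split; [apply Hh | apply Hm]; lra).
    replace (4 * PI * h p / t) with (2 * PI / t * (2 * h p)) by (field; lra). nra.
Qed.

(** * Improper integrals *)

Lemma RInt_is_RInt (f : R -> R) a b : ex_RInt f a b -> RInt_is f a b (RInt f a b).
Proof. intros Hf. exists (ex_RInt_Reals_0 f a b Hf). symmetry. apply RInt_Reals. Qed.

Lemma RInt_is_unique (f : R -> R) a b v : RInt_is f a b v -> RInt f a b = v.
Proof. intros [pr <-]. apply RInt_Reals. Qed.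

Lemma filter_cauchy_converges {T : Type} (F : (T -> Prop) -> Prop) {FF : ProperFilter F}
  (g : T -> R) :
  (forall eps, 0 < eps -> exists P, F P /\ forall u v, P u -> P v -> Rabs (g u - g v) < eps) ->
  exists l, forall eps, 0 < eps -> exists P, F P /\ forall u, P u -> Rabs (g u - l) < eps.
Proof.
  intros Hc.
  destruct (proj1 (filterlim_locally_cauchy (U := R_CompleteSpace) (F := F) g)) as [l Hl].
  - intros eps. destruct (Hc eps (cond_pos eps)) as (P & HP & HPg).
    exists P. split; [exact HP|]. intros u v Pu Pv. exact (HPg v u Pv Pu).
  - exists l. intros eps Heps. exists (fun u => ball l eps (g u)).
    split; [exact (Hl _ (locally_ball l (mkposreal eps Heps))) | exact (fun u Hu => Hu)].
Qed.

Lemma two_sided_cauchy_converges (G : R -> R -> R) :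
  (forall eps, 0 < eps -> exists d M, 0 < d /\ 0 < M /\
     forall a a' b b', 0 < a < d -> 0 < a' < d -> M < b -> M < b' ->
       Rabs (G a b - G a' b') < eps) ->
  exists l, forall eps, 0 < eps -> exists d M, 0 < d /\ 0 < M /\
     forall a b, 0 < a < d -> M < b -> Rabs (G a b - l) < eps.
Proof.
  intros Hc.
  destruct (filter_cauchy_converges (filter_prod (at_right 0) (Rbar_locally p_infty))
              (fun ab => G (fst ab) (snd ab))) as [l Hl].
  - intros eps Heps. destruct (Hc eps Heps) as (d & M & Hd & HM & H).
    exists (fun ab => 0 < fst ab < d /\ M < snd ab). split.
    + exists (fun a => 0 < a < d) (fun b => M < b); [| exists M; auto | simpl; auto].
      exists (mkposreal d Hd). intros y Hy Hy0. split; [exact Hy0|].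
      apply Rabs_lt_between' in Hy. simpl in Hy. lra.
    + intros [a b] [a' b'] [Ha Hb] [Ha' Hb']. apply H; assumption.
  - exists l. intros eps Heps.
    destruct (Hl eps Heps) as (P & [Pa Pb [del Hdel] [M HM] HP] & Hl').
    exists del, (Rmax M 1). split; [apply cond_pos|]. split; [pose proof (Rmax_r M 1); lra|].
    intros a b Ha Hb. apply (Hl' (a, b)), HP.
    + apply Hdel; [apply Rabs_lt_between'; simpl; lra | lra].
    + apply HM. pose proof (Rmax_l M 1); lra.
Qed.

Lemma improper_int_0_inf_cauchy (f : R -> R) :
  (forall a b, 0 < a -> 0 < b -> ex_RInt f a b) ->
  (forall eps, 0 < eps -> exists d M, 0 < d /\ 0 < M /\
     forall a a' b b', 0 < a < d -> 0 < a' < d -> M < b -> M < b' ->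
       Rabs (RInt f a b - RInt f a' b') < eps) ->
  exists l, improper_int_0_inf_is f l.
Proof.
  intros Hex Hc. destruct (two_sided_cauchy_converges (RInt f) Hc) as [l Hl].
  exists l. intros eps Heps. destruct (Hl eps Heps) as (d & M & Hd & HM & H).
  exists d, M. repeat split; auto. intros a b Ha Hb.
  exists (RInt f a b). split; [apply RInt_is_RInt, Hex|]; auto; lra.
Qed.

(** * The cosine-logarithm integral *)

Lemma RInt_inv p q : 0 < p -> 0 < q -> RInt (fun y => / y) p q = ln q - ln p.
Proof.
  intros Hp Hq. apply is_RInt_unique. pose proof (Rmin_glb_lt _ _ _ Hp Hq).
  apply (is_RInt_derive ln (fun y => / y)).
  - intros x Hx. apply is_derive_ln. lra.
  - intros x Hx. apply continuous_Rinv. lra.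
Qed.

Lemma RInt_cos_div_scale t a b : 0 < t -> 0 < a -> 0 < b ->
  RInt (fun u => cos u / u) (t * a) (t * b) = RInt (fun x => cos (t * x) / x) a b.
Proof.
  intros Ht Ha Hb.
  pose proof (RInt_comp_lin (fun u => cos u / u) t 0 a b) as Hlin.
  rewrite !Rplus_0_r in Hlin. rewrite <- Hlin.
  - apply RInt_extR. intros x Hx. pose proof (Rmin_glb_lt _ _ _ Ha Hb).
    change (t * (cos (t * x + 0) / (t * x + 0)) = cos (t * x) / x).
    rewrite Rplus_0_r. field. lra.
  - apply ex_RInt_extR with (fun u => cos (1 * u) / u).
    + intros u _. rewrite Rmult_1_l. reflexivity.
    + apply ex_RInt_cos_div; apply Rmult_lt_0_compat; lra.
Qed.

Lemma abs_RInt_cos_div t p q : 0 < t -> 0 < p -> 0 < q ->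
  Rabs (RInt (fun x => cos (t * x) / x) p q) <= 4 * PI / (Rmin p q * t).
Proof.
  intros Ht Hp Hq.
  assert (Hle : forall p q, 0 < p <= q ->
    Rabs (RInt (fun x => cos (t * x) / x) p q) <= 4 * PI / (p * t)).
  { intros p' q' Hpq. replace (4 * PI / (p' * t)) with (4 * PI * / p' / t) by (field; lra).
    apply (abs_RInt_cos_mul_nonincr t (fun x => / x)); [lra | lra | |].
    - intros; apply Rinv_le_contravar; lra.
    - intros; left; apply Rinv_0_lt_compat; lra. }
  destruct (Rle_dec p q).
  - rewrite Rmin_left by lra. apply Hle; lra.
  - rewrite Rmin_right by lra. rewrite RInt_swapR, Rabs_Ropp by (apply ex_RInt_cos_div; lra).
    apply Hle; lra.
Qed.

Definition cos_log_integral (p q : R) : R :=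
  RInt (fun u => cos u / u) p q - RInt (fun u => / u) p 1.

Lemma cos_log_integral_scale t a b : 0 < t -> 0 < a -> 0 < b ->
  cos_log_integral (t * a) (t * b) =
  RInt (fun x => cos (t * x) / x) a b - RInt (fun x => / x) a (/ t).
Proof.
  intros Ht Ha Hb. unfold cos_log_integral.
  rewrite RInt_cos_div_scale, !RInt_inv; auto using Rmult_lt_0_compat, Rinv_0_lt_compat; try lra.
  rewrite ln_1, ln_mult, ln_Rinv by lra. ring.
Qed.

Lemma cos_log_integral_cauchy eps : 0 < eps -> exists d M, 0 < d /\ 0 < M /\
  forall p p' q q', 0 < p < d -> 0 < p' < d -> M < q -> M < q' ->
    Rabs (cos_log_integral p q - cos_log_integral p' q') < eps.
Proof.
  intros Heps. pose proof PI_RGT_0 as Hpi.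
  exists (eps / 2), (8 * PI / eps).
  assert (HM : 0 < 8 * PI / eps) by (apply Rdiv_lt_0_compat; lra).
  split; [lra|]. split; [lra|].
  intros p p' q q' Hp Hp' Hq Hq'.
  assert (Hcu : forall p q, 0 < p -> 0 < q -> ex_RInt (fun u => cos u / u) p q).
  { intros p0 q0 Hp0 Hq0. apply ex_RInt_extR with (fun u => cos (1 * u) / u).
    - intros u _. rewrite Rmult_1_l. reflexivity.
    - apply ex_RInt_cos_div; lra. }
  assert (E : cos_log_integral p q - cos_log_integral p' q' =
     RInt (fun u => cos u / u - / u) p p' + RInt (fun u => cos u / u) q' q).
  { unfold cos_log_integral.
    rewrite (RInt_minusR (fun u => cos u / u) (fun u => / u)),
      <- (RInt_ChaslesR _ p p' q), <- (RInt_ChaslesR _ p' q' q),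
      <- (RInt_ChaslesR (fun u => / u) p p' 1)
      by (apply ex_RInt_inv || apply Hcu; lra).
    ring. }
  (* near 0 the integrand (cos u - 1)/u is bounded by 1; near oo use the oscillation bound *)
  assert (B1 : Rabs (RInt (fun u => cos u / u - / u) p p') < eps / 2).
  { eapply Rle_lt_trans.
    - apply abs_RInt_le_const_abs with (M := 1).
      + apply ex_RInt_minusR; [apply Hcu | apply ex_RInt_inv]; lra.
      + intros u Hu. pose proof (Rmin_glb_lt _ _ _ (proj1 Hp) (proj1 Hp')).
        replace (cos u / u - / u) with ((cos u - 1) / u) by (field; lra).
        unfold Rdiv. rewrite Rabs_mult, (Rabs_right (/ u)) by (left; apply Rinv_0_lt_compat; lra).
        apply Rle_trans with (u * / u); [|right; field; lra].
        apply Rmult_le_compat_r; [left; apply Rinv_0_lt_compat|apply Rabs_cos_sub_1_le]; lra.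
    - rewrite Rmult_1_r. apply Rabs_lt_between'. lra. }
  assert (B2 : Rabs (RInt (fun u => cos u / u) q' q) < eps / 2).
  { rewrite (RInt_extR _ (fun u => cos (1 * u) / u)) by (intros; rewrite Rmult_1_l; reflexivity).
    eapply Rle_lt_trans; [apply abs_RInt_cos_div; lra|].
    assert (Hmin : 8 * PI / eps < Rmin q' q) by (apply Rmin_glb_lt; lra).
    rewrite Rmult_1_r. apply Rlt_le_trans with (4 * PI / (8 * PI / eps)).
    - apply Rmult_lt_compat_l; [lra|]. apply Rinv_lt_contravar; [apply Rmult_lt_0_compat|]; lra.
    - right; field; lra. }
  rewrite E. eapply Rle_lt_trans; [apply Rabs_triang|]. lra.
Qed.

Lemma cos_log_integral_converges : exists c, forall eps, 0 < eps -> exists d M, 0 < d /\ 0 < M /\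
  forall p q, 0 < p < d -> M < q -> Rabs (cos_log_integral p q - c) < eps.
Proof. exact (two_sided_cauchy_converges cos_log_integral cos_log_integral_cauchy). Qed.

(** * Tail functions *)

Section TailFunction.

Variables (k : R -> R) (alpha : R).
Hypothesis k_nonincr : forall x y, 0 <= x <= y -> k y <= k x.
Hypothesis k_nonneg : forall x, 0 <= x -> 0 <= k x.
Hypothesis k_0 : k 0 = alpha.

Lemma k_le_alpha x : 0 <= x -> k x <= alpha.
Proof. intros Hx. rewrite <- k_0. apply k_nonincr. lra. Qed.

Lemma alpha_nonneg : 0 <= alpha.
Proof. rewrite <- k_0. apply k_nonneg. lra. Qed.

Lemma kx_nonincr x y : 0 < x -> x <= y -> k y / y <= k x / x.
Proof.
  intros Hx Hxy. assert (k y <= k x) by (apply k_nonincr; lra).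
  assert (0 <= k y) by (apply k_nonneg; lra).
  unfold Rdiv. apply Rle_trans with (k y * / x).
  - apply Rmult_le_compat_l; auto. apply Rinv_le_contravar; lra.
  - apply Rmult_le_compat_r; auto. left; apply Rinv_0_lt_compat; lra.
Qed.

Lemma kx_nonneg x : 0 < x -> 0 <= k x / x.
Proof. intros Hx. apply Rdiv_le_0_compat; [apply k_nonneg|]; lra. Qed.

Lemma ex_RInt_cos_kx t p q : 0 < p -> 0 < q ->
  ex_RInt (fun x => cos (t * x) * (k x / x)) p q.
Proof.
  assert (H : forall p q, 0 < p <= q -> ex_RInt (fun x => cos (t * x) * (k x / x)) p q).
  { intros p' q' Hpq. apply ex_RInt_cos_mul_nonincr; [lra| |].
    - intros; apply kx_nonincr; lra.
    - intros; apply kx_nonneg; lra. }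
  intros Hp Hq. destruct (Rle_dec p q); [apply H; lra | apply ex_RInt_swap, H; lra].
Qed.

Lemma ex_RInt_kx p q : 0 < p -> 0 < q -> ex_RInt (fun x => k x / x) p q.
Proof.
  intros Hp Hq. apply ex_RInt_extR with (fun x => cos (0 * x) * (k x / x)).
  - intros x _. rewrite Rmult_0_l, cos_0. ring.
  - apply ex_RInt_cos_kx; auto.
Qed.

Lemma abs_RInt_cos_kx t p q : 0 < t -> 0 < p -> 0 < q ->
  Rabs (RInt (fun x => cos (t * x) * (k x / x)) p q) <= 4 * PI * alpha / (Rmin p q * t).
Proof.
  intros Ht Hp Hq. pose proof PI_RGT_0 as Hpi.
  assert (Hle : forall p q, 0 < p <= q ->
    Rabs (RInt (fun x => cos (t * x) * (k x / x)) p q) <= 4 * PI * alpha / (p * t)).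
  { intros p' q' Hpq. eapply Rle_trans.
    - apply abs_RInt_cos_mul_nonincr;
        [| lra | intros; apply kx_nonincr | intros; apply kx_nonneg]; lra.
    - assert (k p' <= alpha) by (apply k_le_alpha; lra).
      assert (0 < p' * t) by (apply Rmult_lt_0_compat; lra).
      cbv beta. replace (4 * PI * (k p' / p') / t) with (k p' * (4 * PI / (p' * t))) by (field; lra).
      replace (4 * PI * alpha / (p' * t)) with (alpha * (4 * PI / (p' * t))) by (field; lra).
      apply Rmult_le_compat_r; [left; apply Rdiv_lt_0_compat|]; lra. }
  destruct (Rle_dec p q).
  - rewrite Rmin_left by lra. apply Hle; lra.
  - rewrite Rmin_right by lra. rewrite RInt_swapR, Rabs_Ropp by (apply ex_RInt_cos_kx; lra).
    apply Hle; lra.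
Qed.

Definition k_defect x := (alpha - k x) / x.

Lemma k_defect_nonneg x : 0 < x -> 0 <= k_defect x.
Proof. intros Hx. apply Rdiv_le_0_compat; [pose proof (k_le_alpha x)|]; lra. Qed.

Lemma ex_RInt_k_defect p q : 0 < p -> 0 < q -> ex_RInt k_defect p q.
Proof.
  intros Hp Hq. apply ex_RInt_extR with (fun x => alpha * / x - k x / x).
  - intros x _. unfold k_defect, Rdiv. ring.
  - apply ex_RInt_minusR; [apply ex_RInt_scalR, ex_RInt_inv | apply ex_RInt_kx]; auto.
Qed.

Lemma RInt_k_defect p q : 0 < p -> 0 < q ->
  RInt k_defect p q = alpha * RInt (fun x => / x) p q - RInt (fun x => k x / x) p q.
Proof.
  intros Hp Hq.
  rewrite <- (RInt_scalR (fun x => / x)), <- (RInt_minusR (fun x => alpha * / x))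
    by auto using ex_RInt_scalR, ex_RInt_inv, ex_RInt_kx.
  apply RInt_extR. intros x _. unfold k_defect, Rdiv. ring.
Qed.

Lemma ex_RInt_cos_k_defect t p q : 0 < p -> 0 < q ->
  ex_RInt (fun x => cos (t * x) * k_defect x) p q.
Proof.
  intros Hp Hq.
  apply ex_RInt_extR with (fun x => alpha * (cos (t * x) / x) - cos (t * x) * (k x / x)).
  - intros x _. unfold k_defect, Rdiv. ring.
  - apply ex_RInt_minusR; [apply ex_RInt_scalR, ex_RInt_cos_div | apply ex_RInt_cos_kx]; auto.
Qed.

Lemma RInt_cos_k_defect t p q : 0 < p -> 0 < q ->
  RInt (fun x => cos (t * x) * k_defect x) p q =
  alpha * RInt (fun x => cos (t * x) / x) p q - RInt (fun x => cos (t * x) * (k x / x)) p q.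
Proof.
  intros Hp Hq.
  rewrite <- (RInt_scalR (fun x => cos (t * x) / x)),
    <- (RInt_minusR (fun x => alpha * (cos (t * x) / x)))
    by auto using ex_RInt_scalR, ex_RInt_cos_div, ex_RInt_cos_kx.
  apply RInt_extR. intros x _. unfold k_defect, Rdiv. ring.
Qed.

Lemma ex_RInt_phi_re_integrand t p q : 0 < p -> 0 < q ->
  ex_RInt (fun x => (cos (t * x) - 1) * k x / x) p q.
Proof.
  intros Hp Hq. apply ex_RInt_extR with (fun x => cos (t * x) * (k x / x) - k x / x).
  - intros x _. unfold Rdiv. ring.
  - apply ex_RInt_minusR; [apply ex_RInt_cos_kx | apply ex_RInt_kx]; auto.
Qed.

Lemma RInt_phi_re_integrand t p q : 0 < p -> 0 < q ->
  RInt (fun x => (cos (t * x) - 1) * k x / x) p q =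
  RInt (fun x => cos (t * x) * (k x / x)) p q - RInt (fun x => k x / x) p q.
Proof.
  intros Hp Hq. rewrite <- RInt_minusR by auto using ex_RInt_cos_kx, ex_RInt_kx.
  apply RInt_extR. intros x _. unfold Rdiv. ring.
Qed.

Lemma ex_RInt_one_minus_cos_k_defect t p q : 0 < p -> 0 < q ->
  ex_RInt (fun x => (1 - cos (t * x)) * k_defect x) p q.
Proof.
  intros Hp Hq. apply ex_RInt_extR with (fun x => k_defect x - cos (t * x) * k_defect x).
  - intros x _. ring.
  - apply ex_RInt_minusR; [apply ex_RInt_k_defect | apply ex_RInt_cos_k_defect]; auto.
Qed.

Lemma RInt_phi_re_decomp t a b : 0 < t -> 0 < a -> 0 < b ->
  RInt (fun x => (cos (t * x) - 1) * k x / x) a b - RInt (fun x => k x / x) 1 (/ t)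
  - (alpha * cos_log_integral (t * a) (t * b) - RInt (fun x => k x / x) 1 b) =
  RInt (fun x => (1 - cos (t * x)) * k_defect x) a (/ t)
  - RInt (fun x => cos (t * x) * k_defect x) (/ t) b.
Proof.
  intros Ht Ha Hb. assert (Hit : 0 < / t) by (apply Rinv_0_lt_compat; lra).
  rewrite (RInt_extR (fun x => (1 - cos (t * x)) * k_defect x)
             (fun x => k_defect x - cos (t * x) * k_defect x)) by (intros; ring).
  rewrite RInt_minusR by auto using ex_RInt_k_defect, ex_RInt_cos_k_defect.
  rewrite RInt_phi_re_integrand, cos_log_integral_scale, RInt_k_defect, !RInt_cos_k_defect by auto.
  rewrite <- (RInt_ChaslesR (fun x => cos (t * x) * (k x / x)) a (/ t) b),
    <- (RInt_ChaslesR (fun x => cos (t * x) / x) a (/ t) b),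
    <- (RInt_ChaslesR (fun x => k x / x) a (/ t) b),
    <- (RInt_ChaslesR (fun x => k x / x) (/ t) 1 b),
    (RInt_swapR (fun x => k x / x) (/ t) 1)
    by auto using ex_RInt_cos_kx, ex_RInt_cos_div, ex_RInt_kx, Rlt_0_1.
  ring.
Qed.

Lemma abs_RInt_one_minus_cos_k_defect t a eta : 0 < t -> 0 < a <= / t ->
  (forall y, 0 < y <= / t -> alpha - k y <= eta) ->
  Rabs (RInt (fun x => (1 - cos (t * x)) * k_defect x) a (/ t)) <= eta.
Proof.
  intros Ht Ha Heta. assert (Hit : 0 < / t) by (apply Rinv_0_lt_compat; lra).
  apply Rle_trans with ((/ t - a) * (t * eta)).
  - apply abs_RInt_le_const; [lra | apply ex_RInt_one_minus_cos_k_defect; lra |].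
    intros x Hx. rewrite Rabs_mult, (Rabs_right (k_defect x))
      by (apply Rle_ge, k_defect_nonneg; lra).
    assert (Hcos : Rabs (1 - cos (t * x)) <= t * x).
    { rewrite Rabs_minus_sym. apply Rabs_cos_sub_1_le, Rmult_le_pos; lra. }
    assert (Hdef : k_defect x <= eta / x).
    { unfold k_defect, Rdiv.
      apply Rmult_le_compat_r; [left; apply Rinv_0_lt_compat | apply Heta]; lra. }
    apply Rle_trans with (t * x * (eta / x)).
    + apply Rmult_le_compat; [apply Rabs_pos | apply k_defect_nonneg; lra | exact Hcos | exact Hdef].
    + right. field. lra.
  - assert (0 <= eta) by (pose proof (k_le_alpha (/ t)); pose proof (Heta (/ t)); lra).
    replace ((/ t - a) * (t * eta)) with (eta - a * t * eta) by (field; lra).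
    assert (0 <= a * t * eta) by (apply Rmult_le_pos; [apply Rmult_le_pos|]; lra). lra.
Qed.

Lemma abs_RInt_cos_k_defect_near t delta eta : 0 < t -> / t <= delta ->
  (forall y, 0 < y <= delta -> alpha - k y <= eta) ->
  Rabs (RInt (fun x => cos (t * x) * k_defect x) (/ t) delta) <= 8 * PI * eta.
Proof.
  intros Ht Hdelta Heta. assert (Hit : 0 < / t) by (apply Rinv_0_lt_compat; lra).
  pose proof PI_RGT_0 as Hpi.
  set (h := fun x => (k x - k delta) / x).
  assert (Hh_nonincr : forall x y, / t <= x -> x <= y -> y <= delta -> h y <= h x).
  { intros x y Hx Hxy Hy. unfold h. assert (k y <= k x) by (apply k_nonincr; lra).
    assert (k delta <= k y) by (apply k_nonincr; lra).
    unfold Rdiv. apply Rle_trans with ((k y - k delta) * / x).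
    - apply Rmult_le_compat_l; [lra | apply Rinv_le_contravar; lra].
    - apply Rmult_le_compat_r; [left; apply Rinv_0_lt_compat|]; lra. }
  assert (Hh_nonneg : forall x, / t <= x <= delta -> 0 <= h x).
  { intros x Hx. apply Rdiv_le_0_compat; [assert (k delta <= k x) by (apply k_nonincr; lra)|]; lra. }
  rewrite (RInt_extR (fun x => cos (t * x) * k_defect x)
             (fun x => (alpha - k delta) * (cos (t * x) / x) - cos (t * x) * h x)).
  2: { intros x Hx. rewrite Rmin_left in Hx by lra. unfold h, k_defect. field. lra. }
  assert (Hcinv : ex_RInt (fun x => cos (t * x) / x) (/ t) delta) by (apply ex_RInt_cos_div; lra).
  rewrite RInt_minusR, RInt_scalR; auto using ex_RInt_scalR, ex_RInt_cos_mul_nonincr.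
  assert (Hd : 0 <= alpha - k delta <= eta)
    by (pose proof (k_le_alpha delta); pose proof (Heta delta); lra).
  assert (B1 : Rabs (RInt (fun x => cos (t * x) / x) (/ t) delta) <= 4 * PI).
  { eapply Rle_trans; [apply abs_RInt_cos_div; lra|].
    rewrite Rmin_left by lra. right; field; lra. }
  assert (B2 : Rabs (RInt (fun x => cos (t * x) * h x) (/ t) delta) <= 4 * PI * eta).
  { eapply Rle_trans; [apply abs_RInt_cos_mul_nonincr; auto|].
    unfold h. replace (4 * PI * ((k (/ t) - k delta) / / t) / t) with (4 * PI * (k (/ t) - k delta))
      by (field; lra).
    pose proof (k_le_alpha (/ t)). apply Rmult_le_compat_l; lra. }
  eapply Rle_trans; [apply Rabs_triang|].
  rewrite Rabs_Ropp, Rabs_mult, (Rabs_right (alpha - k delta)) by lra.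
  pose proof (Rabs_pos (RInt (fun x => cos (t * x) / x) (/ t) delta)). nra.
Qed.

Lemma abs_RInt_cos_k_defect_far t delta b : 0 < t -> 0 < delta <= b ->
  Rabs (RInt (fun x => cos (t * x) * k_defect x) delta b) <= 8 * PI * alpha / (delta * t).
Proof.
  intros Ht Hb. pose proof alpha_nonneg as Hal.
  rewrite RInt_cos_k_defect by lra.
  assert (B1 := abs_RInt_cos_div t delta b Ht ltac:(lra) ltac:(lra)).
  assert (B2 := abs_RInt_cos_kx t delta b Ht ltac:(lra) ltac:(lra)).
  rewrite Rmin_left in B1, B2 by lra.
  unfold Rminus. eapply Rle_trans; [apply Rabs_triang|].
  rewrite Rabs_Ropp, Rabs_mult, (Rabs_right alpha) by lra.
  replace (8 * PI * alpha / (delta * t))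
    with (alpha * (4 * PI / (delta * t)) + 4 * PI * alpha / (delta * t))
    by (field; lra).
  apply Rplus_le_compat; [apply Rmult_le_compat_l|]; lra.
Qed.

Lemma RInt_phi_re_approx t a b delta eta : 0 < t -> 0 < a <= / t -> / t <= delta <= b ->
  (forall y, 0 < y <= delta -> alpha - k y <= eta) ->
  Rabs (RInt (fun x => (cos (t * x) - 1) * k x / x) a b - RInt (fun x => k x / x) 1 (/ t)
        - (alpha * cos_log_integral (t * a) (t * b) - RInt (fun x => k x / x) 1 b))
  <= eta + 8 * PI * eta + 8 * PI * alpha / (delta * t).
Proof.
  intros Ht Ha Hdb Heta. assert (Hit : 0 < / t) by (apply Rinv_0_lt_compat; lra).
  rewrite RInt_phi_re_decomp by lra.
  rewrite <- (RInt_ChaslesR _ (/ t) delta b) by (apply ex_RInt_cos_k_defect; lra).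
  assert (B1 := abs_RInt_one_minus_cos_k_defect t a eta Ht Ha ltac:(intros; apply Heta; lra)).
  assert (B2 := abs_RInt_cos_k_defect_near t delta eta Ht ltac:(lra) Heta).
  assert (B3 := abs_RInt_cos_k_defect_far t delta b Ht ltac:(lra)).
  apply Rabs_le_between in B1, B2, B3. apply Rabs_le_between. lra.
Qed.

Lemma Rabs_phi_re_integrand_le t x : 0 <= t -> 0 < x ->
  Rabs ((cos (t * x) - 1) * k x / x) <= t * alpha.
Proof.
  intros Ht Hx.
  assert (Hcos : Rabs (cos (t * x) - 1) <= t * x) by (apply Rabs_cos_sub_1_le, Rmult_le_pos; lra).
  assert (0 <= k x <= alpha) by (split; [apply k_nonneg | apply k_le_alpha]; lra).
  assert (Hix : 0 < / x) by (apply Rinv_0_lt_compat; lra).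
  unfold Rdiv. rewrite !Rabs_mult, (Rabs_right (k x)), (Rabs_right (/ x)) by lra.
  apply Rle_trans with (t * x * alpha * / x).
  - apply Rmult_le_compat_r; [left; apply Rinv_0_lt_compat; lra|].
    apply Rmult_le_compat; auto using Rabs_pos; lra.
  - right. field. lra.
Qed.

Hypothesis kx_integrable_at_infinity :
  exists l, improper_int_from_is (fun x => k x / x) 2 l.

Lemma RInt_kx_converges : exists I, forall eps, 0 < eps -> exists M, 0 < M /\
  forall b, M < b -> Rabs (RInt (fun x => k x / x) 1 b - I) < eps.
Proof.
  destruct kx_integrable_at_infinity as [l Hl].
  exists (RInt (fun x => k x / x) 1 2 + l). intros eps Heps.
  destruct (Hl eps Heps) as (M & HM & Htail).
  exists M. split; [lra|]. intros b Hb.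
  destruct (Htail b Hb) as (v & Hv & Hvl). apply RInt_is_unique in Hv.
  rewrite <- (RInt_ChaslesR _ 1 2 b), Hv by (apply ex_RInt_kx; lra).
  replace (RInt (fun x => k x / x) 1 2 + v - (RInt (fun x => k x / x) 1 2 + l)) with (v - l) by ring.
  exact Hvl.
Qed.

Lemma phi_exp_re_spec t : 0 < t -> 0 < alpha ->
  improper_int_0_inf_is (fun x => (cos (t * x) - 1) * k x / x) (phi_exp_re k t).
Proof.
  intros Ht Hal. unfold phi_exp_re, improper_int_0_inf. apply epsilon_spec.
  apply improper_int_0_inf_cauchy; [intros; apply ex_RInt_phi_re_integrand; auto|].
  intros eps Heps. pose proof PI_RGT_0 as Hpi.
  destruct RInt_kx_converges as [I HI].
  destruct (HI (eps / 6) ltac:(lra)) as (M1 & HM1 & Htail).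
  assert (Htal : 0 < t * alpha) by (apply Rmult_lt_0_compat; lra).
  set (d := eps / (3 * (t * alpha))).
  set (M := Rmax M1 (12 * PI * alpha / (t * eps))).
  assert (HMl : M1 <= M) by apply Rmax_l.
  assert (HMr : 12 * PI * alpha / (t * eps) <= M) by apply Rmax_r.
  exists d, M. split; [unfold d; apply Rdiv_lt_0_compat; lra|]. split; [lra|].
  intros a a' b b' Ha Ha' Hb Hb'.
  rewrite <- (RInt_ChaslesR _ a a' b), <- (RInt_ChaslesR _ a' b' b)
    by (apply ex_RInt_phi_re_integrand; lra).
  (* near 0 the integrand is bounded; near infinity the oscillating part decays like 1/b *)
  assert (B1 : Rabs (RInt (fun x => (cos (t * x) - 1) * k x / x) a a') < eps / 3).
  { eapply Rle_lt_trans.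
    - apply abs_RInt_le_const_abs; [apply ex_RInt_phi_re_integrand; lra|].
      intros x Hx. apply Rabs_phi_re_integrand_le; [lra|].
      pose proof (Rmin_glb_lt _ _ _ (proj1 Ha) (proj1 Ha')). lra.
    - replace (eps / 3) with (d * (t * alpha)) by (unfold d; field; lra).
      apply Rmult_lt_compat_r; [lra|]. apply Rabs_lt_between'. lra. }
  assert (B2 : Rabs (RInt (fun x => cos (t * x) * (k x / x)) b' b) < eps / 3).
  { eapply Rle_lt_trans; [apply abs_RInt_cos_kx; lra|].
    set (m := Rmin b' b).
    assert (Hm : M < m) by (apply Rmin_glb_lt; lra).
    assert (Hte : 0 < t * eps) by (apply Rmult_lt_0_compat; lra).
    apply Rmult_lt_reg_r with (m * t); [apply Rmult_lt_0_compat; lra|].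
    replace (4 * PI * alpha / (m * t) * (m * t))
      with (12 * PI * alpha / (t * eps) * (t * eps / 3)) by (field; lra).
    replace (eps / 3 * (m * t)) with (m * (t * eps / 3)) by (unfold Rdiv; ring).
    apply Rmult_lt_compat_r; lra. }
  rewrite (RInt_phi_re_integrand t b' b) by lra.
  assert (B3 : Rabs (RInt (fun x => k x / x) b' b) < eps / 3).
  { rewrite <- (RInt_ChaslesR _ b' 1 b), (RInt_swapR _ 1 b') by (apply ex_RInt_kx; lra).
    pose proof (Htail b ltac:(lra)) as Hb1. pose proof (Htail b' ltac:(lra)) as Hb1'.
    apply Rabs_lt_between' in Hb1, Hb1'. apply Rabs_lt_between. lra. }
  apply Rabs_lt_between in B1, B2, B3. apply Rabs_lt_between. lra.
Qed.

Hypothesis k_right_cont_0 :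
  forall eps, 0 < eps -> exists d, 0 < d /\ forall y, 0 <= y < d -> Rabs (k y - alpha) < eps.

Lemma alpha_sub_k_small eta : 0 < eta ->
  exists delta, 0 < delta /\ forall y, 0 < y <= delta -> alpha - k y <= eta.
Proof.
  intros Heta. destruct (k_right_cont_0 eta Heta) as (d & Hd & Hk).
  exists (d / 2). split; [lra|]. intros y Hy.
  assert (H := Hk y ltac:(lra)). apply Rabs_lt_between' in H. lra.
Qed.

Definition log_phi_ratio (t : R) : R := phi_exp_re k t - RInt (fun x => k x / x) 1 (/ t).

Lemma log_phi_ratio_approx eps : 0 < eps -> 0 < alpha -> exists T, 0 < T /\ forall t, T < t ->
  exists d M, 0 < d /\ 0 < M /\ forall a b, 0 < a < d -> M < b ->
    Rabs (log_phi_ratio t - (alpha * cos_log_integral (t * a) (t * b)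
                              - RInt (fun x => k x / x) 1 b)) < eps.
Proof.
  intros Heps Hal. pose proof PI_RGT_0 as Hpi.
  set (eta := eps / (4 * (1 + 8 * PI))).
  destruct (alpha_sub_k_small eta) as (delta & Hdelta & Hk);
    [unfold eta; apply Rdiv_lt_0_compat; lra|].
  set (T := Rmax (/ delta) (32 * PI * alpha / (delta * eps))).
  assert (HT1 : / delta <= T) by apply Rmax_l.
  assert (HT2 : 32 * PI * alpha / (delta * eps) <= T) by apply Rmax_r.
  assert (HT0 : 0 < / delta) by (apply Rinv_0_lt_compat; lra).
  exists T. split; [lra|]. intros t Ht.
  assert (Htd : / t < delta).
  { rewrite <- (Rinv_inv delta). apply Rinv_lt_contravar; [apply Rmult_lt_0_compat|]; lra. }
  assert (Hfar : 8 * PI * alpha / (delta * t) < eps / 4).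
  { apply Rmult_lt_reg_r with (delta * t); [apply Rmult_lt_0_compat; lra|].
    replace (8 * PI * alpha / (delta * t) * (delta * t))
      with (32 * PI * alpha / (delta * eps) * (delta * eps / 4)) by (field; lra).
    replace (eps / 4 * (delta * t)) with (t * (delta * eps / 4)) by (unfold Rdiv; ring).
    assert (0 < delta * eps / 4) by (apply Rdiv_lt_0_compat; [apply Rmult_lt_0_compat|]; lra).
    apply Rmult_lt_compat_r; lra. }
  assert (Hit : 0 < / t) by (apply Rinv_0_lt_compat; lra).
  destruct (phi_exp_re_spec t ltac:(lra) Hal (eps / 4) ltac:(lra)) as (d0 & M0 & Hd0 & HM0 & Hphi).
  exists (Rmin d0 (/ t)), (Rmax M0 delta).
  split; [apply Rmin_glb_lt; lra|]. split; [pose proof (Rmax_r M0 delta); lra|].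
  intros a b Ha Hb.
  pose proof (Rmin_l d0 (/ t)). pose proof (Rmin_r d0 (/ t)).
  pose proof (Rmax_l M0 delta). pose proof (Rmax_r M0 delta).
  destruct (Hphi a b ltac:(lra) ltac:(lra)) as (v & Hv & Hvphi). apply RInt_is_unique in Hv.
  assert (Happrox := RInt_phi_re_approx t a b delta eta ltac:(lra) ltac:(lra) ltac:(lra) Hk).
  rewrite Hv in Happrox.
  assert (Heta : eta + 8 * PI * eta = eps / 4) by (unfold eta; field; lra).
  unfold log_phi_ratio.
  apply Rabs_lt_between' in Hvphi. apply Rabs_le_between in Happrox. apply Rabs_lt_between. lra.
Qed.

Lemma log_phi_ratio_converges : 0 < alpha -> exists l, forall eps, 0 < eps ->
  exists T, 0 < T /\ forall t, T < t -> Rabs (log_phi_ratio t - l) < eps.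
Proof.
  intros Hal.
  destruct cos_log_integral_converges as [c Hc]. destruct RInt_kx_converges as [I HI].
  exists (alpha * c - I). intros eps Heps.
  destruct (log_phi_ratio_approx (eps / 3) ltac:(lra) Hal) as (T & HT & Happrox).
  destruct (Hc (eps / (3 * alpha))) as (dQ & MQ & HdQ & HMQ & HQ); [apply Rdiv_lt_0_compat; lra|].
  destruct (HI (eps / 3) ltac:(lra)) as (MI & HMI & HIb).
  exists T. split; [exact HT|]. intros t Ht.
  destruct (Happrox t Ht) as (d & M & Hd & HM & Hdt).
  assert (Hsmall : exists a, 0 < a < d /\ t * a < dQ).
  { exists (Rmin d (dQ / t) / 2).
    assert (0 < dQ / t) by (apply Rdiv_lt_0_compat; lra).
    pose proof (Rmin_glb_lt _ _ _ Hd H).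
    pose proof (Rmin_l d (dQ / t)). pose proof (Rmin_r d (dQ / t)).
    split; [lra|]. apply Rlt_le_trans with (t * (dQ / t)); [apply Rmult_lt_compat_l; lra|].
    right; field; lra. }
  assert (Hlarge : exists b, M < b /\ MQ < t * b /\ MI < b).
  { exists (Rmax M (Rmax (MQ / t) MI) + 1).
    pose proof (Rmax_l M (Rmax (MQ / t) MI)). pose proof (Rmax_r M (Rmax (MQ / t) MI)).
    pose proof (Rmax_l (MQ / t) MI). pose proof (Rmax_r (MQ / t) MI).
    repeat split; try lra. apply Rle_lt_trans with (t * (MQ / t)); [right; field; lra|].
    apply Rmult_lt_compat_l; lra. }
  destruct Hsmall as (a & Ha & Hta). destruct Hlarge as (b & Hb & Htb & HbI).
  assert (H1 := Hdt a b Ha Hb).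
  assert (H2 : Rabs (alpha * cos_log_integral (t * a) (t * b) - alpha * c) < eps / 3).
  { rewrite <- Rmult_minus_distr_l, Rabs_mult, (Rabs_right alpha) by lra.
    replace (eps / 3) with (alpha * (eps / (3 * alpha))) by (field; lra).
    apply Rmult_lt_compat_l; [lra|]. apply HQ; [split; [apply Rmult_lt_0_compat|]|]; lra. }
  assert (H3 := HIb b HbI).
  apply Rabs_lt_between' in H1, H2, H3. apply Rabs_lt_between'. lra.
Qed.

Definition slow_factor (t : R) : R := Rpower t alpha * exp (RInt (fun x => k x / x) 1 (/ t)).

Lemma slow_factor_pos t : 0 < slow_factor t.
Proof. unfold slow_factor, Rpower. apply Rmult_lt_0_compat; apply exp_pos. Qed.

Lemma slow_factor_continuous t : 0 < t -> continuity_pt slow_factor t.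
Proof.
  intros Ht. apply continuity_pt_filterlim.
  apply (continuous_mult (fun t => Rpower t alpha) (fun t => exp (RInt (fun x => k x / x) 1 (/ t)))).
  - apply (ex_derive_continuous (fun t => Rpower t alpha)). exists (alpha * Rpower t (alpha - 1)).
    apply is_derive_Reals, derivable_pt_lim_power. lra.
  - apply continuous_exp_comp.
    apply (continuous_comp (fun t => / t) (fun z => RInt (fun x => k x / x) 1 z)).
    + apply continuous_Rinv. lra.
    + assert (Hit : 0 < / t) by (apply Rinv_0_lt_compat; lra).
      apply (continuous_RInt_1 (fun x => k x / x) 1 (/ t)).
      exists (mkposreal (/ t) Hit). intros z Hz.
      apply Rabs_lt_between' in Hz. simpl in Hz.
      apply (RInt_correct (V := R_CompleteNormedModule)), ex_RInt_kx; lra.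
Qed.

Lemma slow_factor_ratio t x : 0 < t -> 0 < x ->
  slow_factor (t * x) / slow_factor t = exp (RInt k_defect (/ (t * x)) (/ t)).
Proof.
  intros Ht Hx.
  assert (Htx : 0 < t * x) by (apply Rmult_lt_0_compat; lra).
  assert (Hit : 0 < / t) by (apply Rinv_0_lt_compat; lra).
  assert (Hitx : 0 < / (t * x)) by (apply Rinv_0_lt_compat; lra).
  unfold slow_factor, Rpower.
  rewrite RInt_k_defect, RInt_inv by lra.
  rewrite <- (RInt_ChaslesR _ 1 (/ t) (/ (t * x))), (RInt_swapR _ (/ (t * x)) (/ t))
    by (apply ex_RInt_kx; lra).
  rewrite !ln_Rinv, ln_mult by lra.
  set (G := RInt (fun x => k x / x) 1 (/ t)).
  set (H := RInt (fun x => k x / x) (/ (t * x)) (/ t)).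
  replace (alpha * (- ln t - - (ln t + ln x)) - H) with
    ((alpha * (ln t + ln x) + (G + - H)) + - (alpha * ln t + G)) by ring.
  rewrite !exp_plus, !exp_Ropp, !exp_plus. field.
  repeat split; apply Rgt_not_eq, exp_pos.
Qed.

Lemma abs_RInt_k_defect_dilation t x delta eta : 0 < t -> 0 < x ->
  / t < delta -> / (t * x) < delta ->
  (forall y, 0 < y <= delta -> alpha - k y <= eta) ->
  Rabs (RInt k_defect (/ (t * x)) (/ t)) <= eta * (Rabs (x - 1) * (1 + x) / x).
Proof.
  intros Ht Hx Hit Hitx Hk.
  assert (Htx : 0 < t * x) by (apply Rmult_lt_0_compat; lra).
  assert (Ht1x : 0 < t * (1 + x)) by (apply Rmult_lt_0_compat; lra).
  eapply Rle_trans.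
  - apply abs_RInt_le_const_abs with (M := eta * (t * (1 + x)));
      [apply ex_RInt_k_defect; apply Rinv_0_lt_compat; lra|].
    intros y Hy.
    assert (Hlow : / (t * (1 + x)) <= Rmin (/ (t * x)) (/ t))
      by (apply Rmin_glb; apply Rinv_le_contravar; nra).
    assert (Hup : Rmax (/ (t * x)) (/ t) < delta) by (apply Rmax_lub_lt; lra).
    assert (0 < / (t * (1 + x))) by (apply Rinv_0_lt_compat; lra).
    assert (Hiy : / y <= t * (1 + x)).
    { rewrite <- (Rinv_inv (t * (1 + x))). apply Rinv_le_contravar; lra. }
    assert (Hdef : alpha - k y <= eta) by (apply Hk; lra).
    rewrite Rabs_right by (apply Rle_ge, k_defect_nonneg; lra).
    unfold k_defect, Rdiv. apply Rmult_le_compat; try lra.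
    + pose proof (k_le_alpha y); lra.
    + left; apply Rinv_0_lt_compat; lra.
  - replace (/ t - / (t * x)) with ((x - 1) / (t * x)) by (field; lra).
    unfold Rdiv at 1.
    rewrite Rabs_mult, (Rabs_right (/ (t * x))) by (left; apply Rinv_0_lt_compat; lra).
    right; field; lra.
Qed.

Lemma slow_factor_slowly_varying : slowly_varying slow_factor.
Proof.
  intros x Hx eps Heps.
  destruct (exp_continuous_eps 0 eps Heps) as (rho & Hrho & Hexp).
  set (K := Rabs (x - 1) * (1 + x) / x).
  assert (HK : 0 <= K)
    by (apply Rdiv_le_0_compat; [apply Rmult_le_pos; [apply Rabs_pos | lra] | lra]).
  set (eta := rho / (2 * (K + 1))).
  assert (Heta : 0 < eta) by (unfold eta; apply Rdiv_lt_0_compat; lra).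
  destruct (alpha_sub_k_small eta Heta) as (delta & Hdelta & Hk).
  set (M := Rmax 1 (Rmax (/ delta) (/ (delta * x)))).
  assert (HM1 : 1 <= M) by apply Rmax_l.
  assert (HM2 : / delta <= M) by (eapply Rle_trans; [apply Rmax_l | apply Rmax_r]).
  assert (HM3 : / (delta * x) <= M) by (eapply Rle_trans; [apply Rmax_r | apply Rmax_r]).
  exists (M + 1). split; [lra|]. intros t Ht.
  assert (Htx : 0 < t * x) by (apply Rmult_lt_0_compat; lra).
  assert (Hit : / t < delta).
  { rewrite <- (Rinv_inv delta). apply Rinv_lt_contravar; [|lra].
    apply Rmult_lt_0_compat; [apply Rinv_0_lt_compat|]; lra. }
  assert (Hitx : / (t * x) < delta).
  { rewrite <- (Rinv_inv delta).
    apply Rinv_lt_contravar; [apply Rmult_lt_0_compat; [apply Rinv_0_lt_compat|]; lra|].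
    apply Rle_lt_trans with (/ (delta * x) * x); [right; field; lra|].
    apply Rmult_lt_compat_r; lra. }
  rewrite slow_factor_ratio, <- exp_0 by lra. apply Hexp. rewrite Rminus_0_r.
  eapply Rle_lt_trans; [apply (abs_RInt_k_defect_dilation t x delta eta); auto; lra|].
  fold K. assert (eta * (K + 1) = rho / 2) by (unfold eta; field; lra). nra.
Qed.

End TailFunction.

(** * The characteristic function *)

Lemma phi_abs_exp k t : phi_abs k t = exp (phi_exp_re k t).
Proof.
  unfold phi_abs, phi_re, phi_im.
  replace ((exp (phi_exp_re k t) * cos (phi_exp_im k t)) ^ 2
           + (exp (phi_exp_re k t) * sin (phi_exp_im k t)) ^ 2)
    with (exp (phi_exp_re k t) ^ 2 * (sin (phi_exp_im k t) ^ 2 + cos (phi_exp_im k t) ^ 2))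
    by ring.
  rewrite <- !Rsqr_pow2, sin2_cos2, Rmult_1_r, Rsqr_pow2.
  apply sqrt_pow2. left; apply exp_pos.
Qed.

Lemma phi_exp_re_Rabs k t : phi_exp_re k t = phi_exp_re k (Rabs t).
Proof.
  unfold phi_exp_re. f_equal. apply functional_extensionality. intro x.
  unfold Rabs. destruct (Rcase_abs t); [|reflexivity].
  replace (- t * x) with (- (t * x)) by ring. rewrite cos_neg. reflexivity.
Qed.

Lemma normalized_phi_abs k alpha t : 0 < t ->
  Rpower t alpha * phi_abs k t / slow_factor k alpha t = exp (log_phi_ratio k t).
Proof.
  intros Ht. unfold slow_factor, log_phi_ratio. rewrite phi_abs_exp.
  unfold Rminus. rewrite exp_plus, exp_Ropp.
  assert (0 < Rpower t alpha) by (unfold Rpower; apply exp_pos).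
  assert (0 < exp (RInt (fun x => k x / x) 1 (/ t))) by apply exp_pos.
  field. split; lra.
Qed.

Theorem mainTheorem6 (k : R -> R) (alpha : R) :
  is_tail_function k ->
  (* int_{(2,oo)} log x nu(dx) < oo, expressed via k (Fubini):
     = log 2 * k 2 + int_2^oo k(x)/x dx *)
  (exists l, improper_int_from_is (fun x => k x / x) 2 l) ->
  k 0 = alpha -> 2 < alpha ->
  exists (L : R -> R) (B : R),
    (forall t, 1 < t -> 0 <= L t) /\
    (forall t, 1 < t -> continuity_pt L t) /\
    slowly_varying L /\
    0 < B /\
    (forall eps, 0 < eps -> exists M, 1 < M /\
       forall t, M < Rabs t ->
         Rabs (Rpower (Rabs t) alpha * phi_abs k t / L (Rabs t) - B) < eps).
Proof.
  (* only 0 < alpha is needed *)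
  intros (Hmono & Hnn & Hrc & _) Htail Hk0 Hal.
  assert (Hrc0 : forall eps, 0 < eps -> exists d, 0 < d /\
                   forall y, 0 <= y < d -> Rabs (k y - alpha) < eps).
  { intros eps Heps. rewrite <- Hk0. destruct (Hrc 0 (Rle_refl 0) eps Heps) as (d & Hd & H).
    exists d. split; [exact Hd|]. intros y Hy. apply H. lra. }
  destruct (log_phi_ratio_converges k alpha Hmono Hnn Hk0 Htail Hrc0 ltac:(lra)) as [l Hl].
  exists (slow_factor k alpha), (exp l).
  split; [intros; left; apply slow_factor_pos|].
  split; [intros; apply (slow_factor_continuous k alpha Hmono Hnn); lra|].
  split; [apply (slow_factor_slowly_varying k alpha Hmono Hnn Hk0 Hrc0)|].
  split; [apply exp_pos|].
  intros eps Heps.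
  destruct (exp_continuous_eps l eps Heps) as (rho & Hrho & Hexp).
  destruct (Hl rho Hrho) as (T & HT & HlT).
  exists (T + 1). split; [lra|]. intros t Ht.
  rewrite phi_abs_exp, phi_exp_re_Rabs, <- phi_abs_exp, normalized_phi_abs by lra.
  apply Hexp, HlT. lra.
Qed.
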